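(* Let $(V,L,\varphi,E)$ and $(V,C,\psi,E)$ be valuation systems. Assume that $\psi$ extends $\varphi$ and that $(V,C,\psi,E)$ is complete. Then $\varphi$ is extendible and $\psi$ extends $\overline\varphi$.
   Context: A valuation system $(V,L,\varphi,E)$ consists of: (i) a lattice $V$ which is $\sigma$-distributive (for every $a\in V$ and sequence $(b_n)$ with existing infimum, $\bigwedge_n(a\vee b_n)$ exists and equals $a\vee\bigwedge_n b_n$, and dually for suprema); (ii) a sublattice $L$ of $V$; (iii) a partially ordered abelian group $E$ which is R-complete (whenever $x_1\ge x_2\ge\cdots$ and $y_1\ge y_2\ge\cdots$ in $E$ are such that $\bigwedge_n(x_n+y_n)$ exists, $\bigwedge_n x_n$ and $\bigwedge_n y_n$ exist; dually for increasing sequences); (iv) a valuation $\varphi:L\to E$ (order-preserving, $\varphi(a\wedge b)+\varphi(a\vee b)=\varphi(a)+\varphi(b)$). A map $\psi:C\to E$ extends $\varphi:L\to E$ if $L\subseteq C$ and $\psi|_L=\varphi$. A decreasing (resp. increasing) sequence $(a_n)$ in $L$ is $\varphi$-convergent if $\bigwedge_n a_n$ exists in $V$ and $\bigwedge_n\varphi(a_n)$ exists in $E$ (resp. with suprema). The system is $\Pi$-complete if for every $\varphi$-convergent decreasing $(a_n)$ in $L$, $\bigwedge_n a_n\in L$ and $\varphi(\bigwedge_n a_n)=\bigwedge_n\varphi(a_n)$; $\Sigma$-complete dually; complete if both. $\Pi L:=\{\bigwedge_n a_n:(a_n)\ \varphi\text{-convergent decreasing}\}$ and $\varphi$ is $\Pi$-extendible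 if there is a valuation $\Pi\varphi:\Pi L\to E$ with $\Pi\varphi(\bigwedge_n a_n)=\bigwedge_n\varphi(a_n)$; $\Sigma L,\Sigma\varphi$ dually. Hierarchy (transfinite recursion): $\Pi_0\varphi=\Sigma_0\varphi=\varphi$; $\varphi$ is $\Pi_{\alpha+1}$-extendible iff it is $\Sigma_\alpha$-extendible and $\Sigma_\alpha\varphi$ is $\Pi$-extendible, with $\Pi_{\alpha+1}\varphi=\Pi(\Sigma_\alpha\varphi)$; $\varphi$ is $\Sigma_{\alpha+1}$-extendible iff it is $\Pi_\alpha$-extendible and $\Pi_\alpha\varphi$ is $\Sigma$-extendible, with $\Sigma_{\alpha+1}\varphi=\Sigma(\Pi_\alpha\varphi)$; at a limit $\lambda$, $\varphi$ is $\Pi_\lambda$-extendible iff $\Pi_\alpha$-extendible for all $\alpha<\lambda$, and then $\Pi_\lambda\varphi$ is the common extension of the $\Pi_\alpha\varphi$ on $\bigcup_{\alpha<\lambda}\Pi_\alpha L$; similarly $\Sigma_\lambda$. The hierarchy has collapsed at $Q$, where $Q=\Pi_\alpha\varphi$ or $Q=\Sigma_\alpha\varphi$, if $\varphi$ is $\Pi_{\alpha+1}$- and $\Sigma_{\alpha+1}$-extendible and $\Pi(Q)=Q=\Sigma(Q)$. $\varphi$ is extendible if the hierarchy has collapsed at some $Q$; this $Q$ is then unique and denoted $\overline\varphi$. *)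

From HB Require Import structures.
From mathcomp Require Import all_boot all_order all_algebra.
Set Implicit Arguments. Unset Strict Implicit. Unset Printing Implicit Defensive.
Import Order.TTheory GRing.Theory Num.Theory.

Local Open Scope order_scope.

Section Bounds.
Context {dT : Order.disp_t} {T : porderType dT}.
Definition is_infimum (a : nat -> T) (x : T) : Prop :=
  (forall n, x <= a n) /\ (forall y, (forall n, y <= a n) -> y <= x).
Definition is_supremum (a : nat -> T) (x : T) : Prop :=
  (forall n, a n <= x) /\ (forall y, (forall n, a n <= y) -> x <= y).
Definition has_inf (a : nat -> T) : Prop := exists x, is_infimum a x.
Definition has_sup (a : nat -> T) : Prop := exists x, is_supremum a x.
Definition decreasing (a : nat -> T) : Prop := forall n, a n.+1 <= a n.
Definition increasing (a : nat -> T) : Prop := forall n, a n <= a n.+1.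
End Bounds.

Definition sigma_distributive {d : Order.disp_t} (V : latticeType d) : Prop :=
  (forall (a : V) (b : nat -> V) (m : V), is_infimum b m ->
      is_infimum (fun n => a `|` b n) (a `|` m)) /\
  (forall (a : V) (b : nat -> V) (m : V), is_supremum b m ->
      is_supremum (fun n => a `&` b n) (a `&` m)).

Definition po_group (E : porderZmodType) : Prop :=
  forall x y z : E, (x <= y)%R -> (x + z <= y + z)%R.

Definition R_complete (E : porderZmodType) : Prop :=
  (forall x y : nat -> E, decreasing x -> decreasing y ->
     has_inf (fun n => (x n + y n)%R) -> has_inf x /\ has_inf y) /\
  (forall x y : nat -> E, increasing x -> increasing y ->
     has_sup (fun n => (x n + y n)%R) -> has_sup x /\ has_sup y).

Section Valuations.
Context {d : Order.disp_t} {V : latticeType d} {E : porderZmodType}.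

(* A partial map V -> E: a domain together with a function (relevant on the domain). *)
Record pmap := PMap { dom : V -> Prop; fn : V -> E }.

Definition sublattice (L : V -> Prop) : Prop :=
  forall a b, L a -> L b -> L (a `&` b) /\ L (a `|` b).

Definition valuation (s : pmap) : Prop :=
  sublattice (dom s) /\
  (forall a b, dom s a -> dom s b -> a <= b -> (fn s a <= fn s b)%R) /\
  (forall a b, dom s a -> dom s b ->
     (fn s (a `&` b) + fn s (a `|` b) = fn s a + fn s b)%R).

Definition valuation_system (s : pmap) : Prop :=
  sigma_distributive V /\ po_group E /\ R_complete E /\ valuation s.

Definition extends (s t : pmap) : Prop :=
  (forall x, dom s x -> dom t x) /\ (forall x, dom s x -> fn t x = fn s x).

Definition peq (s t : pmap) : Prop :=
  (forall x, dom s x <-> dom t x) /\ (forall x, dom s x -> fn s x = fn t x).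

Definition conv_dec (s : pmap) (a : nat -> V) : Prop :=
  (forall n, dom s (a n)) /\ decreasing a /\ has_inf a /\ has_inf (fun n => fn s (a n)).
Definition conv_inc (s : pmap) (a : nat -> V) : Prop :=
  (forall n, dom s (a n)) /\ increasing a /\ has_sup a /\ has_sup (fun n => fn s (a n)).

Definition Pi_complete (s : pmap) : Prop :=
  forall a, conv_dec s a -> forall x, is_infimum a x ->
    dom s x /\ is_infimum (fun n => fn s (a n)) (fn s x).
Definition Sigma_complete (s : pmap) : Prop :=
  forall a, conv_inc s a -> forall x, is_supremum a x ->
    dom s x /\ is_supremum (fun n => fn s (a n)) (fn s x).
Definition complete (s : pmap) : Prop := Pi_complete s /\ Sigma_complete s.

Definition Pi_dom (s : pmap) (x : V) : Prop :=
  exists a, conv_dec s a /\ is_infimum a x.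
Definition Sigma_dom (s : pmap) (x : V) : Prop :=
  exists a, conv_inc s a /\ is_supremum a x.

Definition Pi_ext (s t : pmap) : Prop :=
  (forall x, dom t x <-> Pi_dom s x) /\ valuation t /\
  (forall a, conv_dec s a -> forall x, is_infimum a x ->
     is_infimum (fun n => fn s (a n)) (fn t x)).
Definition Sigma_ext (s t : pmap) : Prop :=
  (forall x, dom t x <-> Sigma_dom s x) /\ valuation t /\
  (forall a, conv_inc s a -> forall x, is_supremum a x ->
     is_supremum (fun n => fn s (a n)) (fn t x)).

Definition Pi_extendible (s : pmap) : Prop := exists t, Pi_ext s t.
Definition Sigma_extendible (s : pmap) : Prop := exists t, Sigma_ext s t.

(* ---------- the transfinite hierarchy ----------
   Ordinals are represented by an arbitrary well-ordered index type (W, lt);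
   every well-order is isomorphic to an ordinal. *)
Definition well_order (W : Type) (lt : W -> W -> Prop) : Prop :=
  well_founded lt /\ (forall x y z, lt x y -> lt y z -> lt x z) /\
  (forall x y, lt x y \/ x = y \/ lt y x).

(* g is the immediate predecessor of b, i.e. b = g + 1 *)
Definition is_pred (W : Type) (lt : W -> W -> Prop) (g b : W) : Prop :=
  lt g b /\ (forall h, lt h b -> h = g \/ lt h g).

(* P b = Pi_b phi and S b = Sigma_b phi for all b in W
   (in particular phi is Pi_b- and Sigma_b-extendible for all b in W). *)
Definition hierarchy (phi : pmap) (W : Type) (lt : W -> W -> Prop)
    (P S : W -> pmap) : Prop :=
  forall b : W,
    ((forall g, ~ lt g b) -> peq (P b) phi /\ peq (S b) phi) /\
    (forall g, is_pred lt g b -> Pi_ext (S g) (P b) /\ Sigma_ext (P g) (S b)) /\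
    ((exists g, lt g b) -> (forall g, ~ is_pred lt g b) ->
       (forall x, dom (P b) x <-> exists g, lt g b /\ dom (P g) x) /\
       (forall g, lt g b -> extends (P g) (P b)) /\
       (forall x, dom (S b) x <-> exists g, lt g b /\ dom (S g) x) /\
       (forall g, lt g b -> extends (S g) (S b))).

(* The hierarchy has collapsed at Q, where Q = Pi_a phi or Q = Sigma_a phi:
   phi is Pi_{a+1}- and Sigma_{a+1}-extendible and Pi(Q) = Q = Sigma(Q). *)
Definition collapsed_at (phi Q : pmap) : Prop :=
  exists (W : Type) (lt : W -> W -> Prop) (P S : W -> pmap) (a : W),
    well_order lt /\ hierarchy phi lt P S /\
    Pi_extendible (S a) /\ Sigma_extendible (P a) /\
    (Q = P a \/ Q = S a) /\ Pi_ext Q Q /\ Sigma_ext Q Q.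

Definition extendible (phi : pmap) : Prop := exists Q, collapsed_at phi Q.

End Valuations.

From Pilot Require Import Defs.
From mathcomp Require Import all_boot all_order all_algebra.
From mathcomp Require Import boolp wochoice.
Set Implicit Arguments. Unset Strict Implicit. Unset Printing Implicit Defensive.
Import Order.TTheory GRing.Theory Num.Theory.

(* Because (C, psi) is complete, for every sublattice D of C the
   sets Pi D and Sigma D (computed with psi) are again sublattices of C, and
   psi itself gives the required infima and suprema on them.  So the whole
   Pi/Sigma hierarchy of phi can be built inside (C, psi), all its stages
   being restrictions of psi; conversely, by well-founded induction, every
   hierarchy of phi consists of restrictions of psi.  The stages increase, so
   if the hierarchy never collapsed, choosing at each limit stage an element
   that only appears one step later would inject the index set into V;
   indexing the limit stages by a well-order of the subsets of V contradicts
   Cantor's theorem. *)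

Local Open Scope order_scope.

Section Bounds.
Context {dT : Order.disp_t} {T : porderType dT}.
Implicit Types (a : nat -> T) (x y : T).

Lemma is_infimum_unique a x y : is_infimum a x -> is_infimum a y -> x = y.
Proof. by move=> [xa xg] [ya yg]; apply/le_anti; rewrite (yg _ xa) (xg _ ya). Qed.

Lemma is_supremum_unique a x y : is_supremum a x -> is_supremum a y -> x = y.
Proof. by move=> [xa xg] [ya yg]; apply/le_anti; rewrite (xg _ ya) (yg _ xa). Qed.

Lemma is_infimum_cst x : is_infimum (fun=> x) x.
Proof. by split=> // y /(_ 0%N). Qed.

Lemma is_supremum_cst x : is_supremum (fun=> x) x.
Proof. by split=> // y /(_ 0%N). Qed.

Lemma decreasing_le a m n : decreasing a -> (m <= n)%N -> a n <= a m.
Proof.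
move=> da; apply: (homo_leq (r := fun x y => y <= x)) => // y x z yx zy.
exact: le_trans zy yx.
Qed.

Lemma increasing_le a m n : increasing a -> (m <= n)%N -> a m <= a n.
Proof.
by move=> ia; apply: (homo_leq (r := fun x y => x <= y)) => // y x z; apply: le_trans.
Qed.

End Bounds.

Section LatticeBounds.
Context {d : Order.disp_t} {V : latticeType d}.
Implicit Types (a b : nat -> V) (x y : V).

Lemma is_infimum_meet a b x y : is_infimum a x -> is_infimum b y ->
  is_infimum (fun n => a n `&` b n) (x `&` y).
Proof.
move=> [ax xg] [by_ yg]; split=> [n|z zab]; first exact: leI2.
have [za zb] : (forall n, z <= a n) /\ (forall n, z <= b n).
  by split=> n; have := zab n; rewrite lexI => /andP[].
by rewrite lexI (xg _ za) (yg _ zb).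
Qed.

Lemma is_supremum_join a b x y : is_supremum a x -> is_supremum b y ->
  is_supremum (fun n => a n `|` b n) (x `|` y).
Proof.
move=> [ax xg] [by_ yg]; split=> [n|z zab]; first exact: leU2.
have [az bz] : (forall n, a n <= z) /\ (forall n, b n <= z).
  by split=> n; have := zab n; rewrite leUx => /andP[].
by rewrite leUx (xg _ az) (yg _ bz).
Qed.

Lemma is_infimum_join a b x y : sigma_distributive V ->
  decreasing a -> decreasing b -> is_infimum a x -> is_infimum b y ->
  is_infimum (fun n => a n `|` b n) (x `|` y).
Proof.
move=> [distr _] da db ax by_; split=> [n|z zab].
  by apply: leU2; [case: ax | case: by_].
have z_le n m : z <= a n `|` b m.
  apply: le_trans (zab (n + m)%N) _.
  by apply: leU2; apply: decreasing_le => //; [exact: leq_addr | exact: leq_addl].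
have z_le_y n : z <= a n `|` y by apply: (distr (a n) b y by_).2 => m; exact: z_le.
by rewrite joinC; apply: (distr y a x ax).2 => n; rewrite joinC.
Qed.

Lemma is_supremum_meet a b x y : sigma_distributive V ->
  increasing a -> increasing b -> is_supremum a x -> is_supremum b y ->
  is_supremum (fun n => a n `&` b n) (x `&` y).
Proof.
move=> [_ distr] ia ib ax by_; split=> [n|z zab].
  by apply: leI2; [case: ax | case: by_].
have le_z n m : a n `&` b m <= z.
  apply: le_trans _ (zab (n + m)%N).
  by apply: leI2; apply: increasing_le => //; [exact: leq_addr | exact: leq_addl].
have y_le_z n : a n `&` y <= z by apply: (distr (a n) b y by_).2 => m; exact: le_z.
by rewrite meetC; apply: (distr y a x ax).2 => n; rewrite meetC.
Qed.

End LatticeBounds.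

Section GroupBounds.
Variable E : porderZmodType.
Hypothesis poE : po_group E.
Local Open Scope ring_scope.
Implicit Types (a b : nat -> E) (x y z : E).

Lemma po_group_leD (x1 y1 x2 y2 : E) : x1 <= y1 -> x2 <= y2 -> x1 + x2 <= y1 + y2.
Proof.
move=> le1 le2; apply: le_trans (poE x2 le1) _.
by rewrite ![y1 + _]addrC; exact: poE.
Qed.

Lemma po_group_lerBlDr x y z : x - z <= y <-> x <= y + z.
Proof.
split=> h; first by have := poE z h; rewrite subrK.
by have := poE (- z) h; rewrite addrK.
Qed.

Lemma po_group_lerBrDr x y z : x <= y - z <-> x + z <= y.
Proof.
split=> h; first by have := poE z h; rewrite subrK.
by have := poE (- z) h; rewrite addrK.
Qed.

Lemma is_infimum_add a b x y : decreasing a -> decreasing b ->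
  is_infimum a x -> is_infimum b y -> is_infimum (fun n => a n + b n) (x + y).
Proof.
move=> da db [ax xg] [by_ yg]; split=> [n|z zab]; first exact: po_group_leD.
have z_le n m : z <= a n + b m.
  apply: le_trans (zab (n + m)%N) _.
  by apply: po_group_leD; apply: decreasing_le => //; [exact: leq_addr | exact: leq_addl].
have z_le_x m : z - b m <= x by apply: xg => n; apply/po_group_lerBlDr.
have : z - x <= y.
  by apply: yg => m; apply/po_group_lerBlDr; rewrite addrC -po_group_lerBlDr.
by rewrite po_group_lerBlDr addrC.
Qed.

Lemma is_supremum_add a b x y : increasing a -> increasing b ->
  is_supremum a x -> is_supremum b y -> is_supremum (fun n => a n + b n) (x + y).
Proof.
move=> ia ib [ax xg] [by_ yg]; split=> [n|z zab]; first exact: po_group_leD.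
have le_z n m : a n + b m <= z.
  apply: le_trans _ (zab (n + m)%N).
  by apply: po_group_leD; apply: increasing_le => //; [exact: leq_addr | exact: leq_addl].
have x_le_z m : x <= z - b m by apply: xg => n; apply/po_group_lerBrDr.
have : y <= z - x.
  by apply: yg => m; apply/po_group_lerBrDr; rewrite addrC -po_group_lerBrDr.
by rewrite po_group_lerBrDr addrC.
Qed.

End GroupBounds.

Section WellOrders.

Lemma wochoice_well_order (T : eqType) (R : rel T) :
  wochoice.well_order R -> Defs.well_order (fun x y => ~~ R y x).
Proof.
move=> Rwo; have Rchain : wo_chain R predT by exact: withinW.
have Rtotal x y : R x y || R y x by apply: (wo_chainW Rchain).
have Ranti x y : R x y -> R y x -> x = y.
  by move=> Rxy Ryx; apply: (wo_chain_antisymmetric Rchain) => //; rewrite Rxy.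
split; [|split].
- move=> x; apply: contrapT => nacc.
  have [m [[/asboolP mA mlow] _]] :=
    Rwo [pred z | `[< ~ Acc (fun x y => ~~ R y x) z >]] (ex_intro _ x (asboolT nacc)).
  apply: mA; constructor => y /negP ym; apply: contrapT => nacc_y.
  by apply: ym; apply: mlow; exact/asboolP.
- move=> x y z /negP yx /negP zy; apply/negP => zx.
  have [m [[mxyz mlow] _]] := Rwo (mem [:: x; y; z]) (ex_intro _ x (mem_head _ _)).
  have lowm w : w \in [:: x; y; z] -> R m w by exact: mlow.
  move: mxyz; rewrite !inE => /or3P[] /eqP me; subst m.
  + have Rxz : R x z by apply: lowm; rewrite !inE eqxx !orbT.
    have xz := Ranti _ _ Rxz zx; subst z.
    by case/orP: (Rtotal x y).
  + by apply: yx; apply: lowm; rewrite !inE eqxx.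
  + by apply: zy; apply: lowm; rewrite !inE eqxx orbT.
- move=> x y; case Ryx: (R y x); last by left.
  case Rxy: (R x y); last by right; right.
  by right; left; exact: Ranti.
Qed.

Variables (T : Type) (lt : T -> T -> Prop).
Hypothesis lt_wo : Defs.well_order lt.

Lemma well_order_irrefl x : ~ lt x x.
Proof. by elim: (lt_wo.1 x) => y _ IH yy; apply: (IH y). Qed.

Definition lexn (p q : T * nat) : Prop :=
  lt p.1 q.1 \/ p.1 = q.1 /\ (p.2 < q.2)%N.

Lemma well_order_lexn : Defs.well_order lexn.
Proof.
have [lt_wf [lt_trans lt_tri]] := lt_wo; split; [|split].
- case=> S n; elim/(well_founded_ind lt_wf): S n => S IHS n.
  elim/ltn_ind: n => n IHn; constructor => -[S' m] [/= lt_S|[/= -> mn]].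
    exact: IHS.
  exact: IHn.
- case=> [S k] [S' m] [S'' n]; rewrite /lexn /=.
  case=> [lt1|[<- km]] [lt2|[<- mn]].
  + by left; exact: lt_trans lt2.
  + by left.
  + by left.
  + by right; split=> //; exact: ltn_trans mn.
- case=> [S m] [S' n]; rewrite /lexn /=.
  case: (lt_tri S S') => [lt_S|[<-|lt_S]]; [by left; left | | by right; right; left].
  by case: (ltngtP m n) => [mn|nm|->]; [left; right | right; right; right | right; left].
Qed.

Lemma lexn0 g S : lexn g (S, 0%N) <-> lt g.1 S.
Proof. by split=> [[//|[_]]|]; [rewrite ltn0 | left]. Qed.

Lemma is_pred_lexnS g : is_pred lexn g (g.1, g.2.+1).
Proof.
case: g => S k; split; first by right.
case=> S' m [/= lt_S|[/= -> mk]]; first by right; left.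
by move: mk; rewrite ltnS leq_eqVlt => /orP[/eqP ->|mk]; [left | right; right].
Qed.

Lemma is_pred_lexnP g b : is_pred lexn g b -> b = (g.1, g.2.+1).
Proof.
have not_below (U : T) m : ~ ((U, m.+1) = (U, m) \/ lexn (U, m.+1) (U, m)).
  by case=> [[/esym/n_Sn]|[/well_order_irrefl|[_ /=]]] //; rewrite ltnNge leqnSn.
case: g b => [S k] [S' n] [[/= lt_S|[/= <- kn]] gmax].
  by case: (not_below S k); apply: gmax; left.
move: kn; rewrite leq_eqVlt => /orP[/eqP <- //|kn].
by case: (not_below S k); apply: gmax; right.
Qed.

End WellOrders.

Lemma no_injection_from_predicates (T : Type) (g : (T -> Prop) -> T) : ~ injective g.
Proof.
move=> g_inj; pose D x := exists S, g S = x /\ ~ S x.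
have [DgD|nDgD] := EM (D (g D)).
  by have [S [/g_inj -> nDgD]] := DgD; apply: nDgD.
exact: nDgD (ex_intro _ D (conj erefl nDgD)).
Qed.

Lemma separating_injective (T U : Type) (lt : T -> T -> Prop) (B : T -> U -> Prop)
    (g : T -> U) :
  (forall x y, lt x y \/ x = y \/ lt y x) ->
  (forall x, ~ B x (g x)) -> (forall x y, lt x y -> B y (g x)) -> injective g.
Proof.
move=> tri gB gB_lt x y gxy; case: (tri x y) => [xy|[//|yx]]; exfalso.
  by apply: (gB y); rewrite -gxy; exact: gB_lt.
by apply: (gB x); rewrite gxy; exact: gB_lt.
Qed.

Section Valuations.
Context {d : Order.disp_t} {V : latticeType d} {E : porderZmodType}.
Local Notation pmap := (@Defs.pmap d V E).
Implicit Types (s t u : pmap) (a : nat -> V).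

Lemma extends_fn_seq s t a : extends s t -> (forall n, dom s (a n)) ->
  (fun n => fn t (a n)) = (fun n => fn s (a n)).
Proof. by move=> st sa; apply/funext => n; exact: st.2. Qed.

Lemma conv_dec_extends s t a : extends s t -> conv_dec s a -> conv_dec t a.
Proof.
move=> st [sa [da [ainf fainf]]]; split; first by move=> n; exact: st.1.
by rewrite (extends_fn_seq st sa).
Qed.

Lemma conv_inc_extends s t a : extends s t -> conv_inc s a -> conv_inc t a.
Proof.
move=> st [sa [ia [asup fasup]]]; split; first by move=> n; exact: st.1.
by rewrite (extends_fn_seq st sa).
Qed.

Lemma sub_Pi_dom s x : dom s x -> Pi_dom s x.
Proof.
move=> sx; exists (fun=> x); split; last exact: is_infimum_cst.
by do 3!split=> //; [exists x | exists (fn s x)]; exact: is_infimum_cst.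
Qed.

Lemma sub_Sigma_dom s x : dom s x -> Sigma_dom s x.
Proof.
move=> sx; exists (fun=> x); split; last exact: is_supremum_cst.
by do 3!split=> //; [exists x | exists (fn s x)]; exact: is_supremum_cst.
Qed.

Lemma Pi_dom_mono (D D' : V -> Prop) (f : V -> E) : (forall x, D x -> D' x) ->
  forall x, Pi_dom (PMap D f) x -> Pi_dom (PMap D' f) x.
Proof.
by move=> DD' x [a [[aD conv] ax]]; exists a; split=> //; split=> // n; exact: DD' (aD n).
Qed.

Lemma Sigma_dom_mono (D D' : V -> Prop) (f : V -> E) : (forall x, D x -> D' x) ->
  forall x, Sigma_dom (PMap D f) x -> Sigma_dom (PMap D' f) x.
Proof.
by move=> DD' x [a [[aD conv] ax]]; exists a; split=> //; split=> // n; exact: DD' (aD n).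
Qed.

Lemma Pi_dom_complete s t x : Pi_complete t -> extends s t -> Pi_dom s x -> dom t x.
Proof. by move=> tc st [a [sa ax]]; case: (tc a (conv_dec_extends st sa) x ax). Qed.

Lemma Sigma_dom_complete s t x :
  Sigma_complete t -> extends s t -> Sigma_dom s x -> dom t x.
Proof. by move=> tc st [a [sa ax]]; case: (tc a (conv_inc_extends st sa) x ax). Qed.

Lemma Pi_ext_extends s t u : Pi_complete t -> extends s t -> Pi_ext s u -> extends u t.
Proof.
move=> tc st [udom [_ uval]]; split=> x /udom [a [sa ax]].
  by case: (tc a (conv_dec_extends st sa) x ax).
have [_] := tc a (conv_dec_extends st sa) x ax.
rewrite (extends_fn_seq st sa.1) => tinf; exact: is_infimum_unique tinf (uval a sa x ax).
Qed.

Lemma Sigma_ext_extends s t u :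
  Sigma_complete t -> extends s t -> Sigma_ext s u -> extends u t.
Proof.
move=> tc st [udom [_ uval]]; split=> x /udom [a [sa ax]].
  by case: (tc a (conv_inc_extends st sa) x ax).
have [_] := tc a (conv_inc_extends st sa) x ax.
rewrite (extends_fn_seq st sa.1) => tsup; exact: is_supremum_unique tsup (uval a sa x ax).
Qed.

Lemma peq_extends u s t : peq u s -> extends s t -> extends u t.
Proof.
move=> [us us_fn] [st st_fn]; split=> x ux; first by apply: st; apply/us.
by rewrite st_fn ?us_fn //; apply/us.
Qed.

Lemma extends_cover (I : Type) (J : I -> Prop) (P : I -> pmap) u t :
  (forall x, dom u x -> exists i, J i /\ dom (P i) x) ->
  (forall i, J i -> extends (P i) u) -> (forall i, J i -> extends (P i) t) ->
  extends u t.
Proof.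
move=> cover Pu Pt; split=> x /cover [i [Ji xi]]; first exact: (Pt i Ji).1.
by rewrite (Pt i Ji).2 // (Pu i Ji).2.
Qed.

Lemma hierarchy_extends phi t (W : Type) (lt : W -> W -> Prop) (P S : W -> pmap) :
  well_founded lt -> hierarchy phi lt P S -> extends phi t -> complete t ->
  forall b, extends (P b) t /\ extends (S b) t.
Proof.
move=> lt_wf hier phit [tPi tSigma]; elim/(well_founded_ind lt_wf) => b IH.
have [hmin [hsucc hlim]] := hier b.
have [[g gb]|nopred] := EM (exists g, is_pred lt g b).
  have [Pg Sg] := IH g gb.1; have [PiS SigmaP] := hsucc g gb.
  by split; [exact: Pi_ext_extends PiS | exact: Sigma_ext_extends SigmaP].
have [[g gb]|nolt] := EM (exists g, lt g b).
  have [Pdom [Pext [Sdom Sext]]] := hlim (ex_intro _ g gb) ((forallNP _).2 nopred).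
  split; first by apply: (extends_cover (P := P) (J := lt^~ b)) => [x /Pdom|//|h /IH[]].
  by apply: (extends_cover (P := S) (J := lt^~ b)) => [x /Sdom|//|h /IH[]].
have [Pphi Sphi] := hmin ((forallNP _).2 nolt).
by split; apply: peq_extends phit.
Qed.

Lemma collapsed_at_extends phi t Q :
  collapsed_at phi Q -> extends phi t -> complete t -> extends Q t.
Proof.
move=> [W [lt [P [S [a [[lt_wf _] [hier [_ [_ [Qa _]]]]]]]]]] phit tc.
have [Pa Sa] := hierarchy_extends lt_wf hier phit tc a.
by case: Qa => ->.
Qed.

Lemma valuation_restrict t (D : V -> Prop) : valuation t -> sublattice D ->
  (forall x, D x -> dom t x) -> valuation (PMap D (fn t)).
Proof.
move=> [_ [mono modular]] sD Dt.
by split=> //; split=> x y /Dt tx /Dt ty; [exact: mono | exact: modular].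
Qed.

Hypotheses (distrV : sigma_distributive V) (poE : po_group E) (RcE : R_complete E).

Lemma Pi_dom_sublattice s : valuation s -> sublattice (Pi_dom s).
Proof.
move=> [sl [mono modular]] x y.
move=> [a [[aD [da [_ [X aX]]]] ax]] [b [[bD [db [_ [Y bY]]]] by_]].
have abD n : dom s (a n `&` b n) /\ dom s (a n `|` b n) := sl _ _ (aD n) (bD n).
have [meet_inf join_inf] :
    has_inf (fun n => fn s (a n `&` b n)) /\ has_inf (fun n => fn s (a n `|` b n)).
  apply: RcE.1.
  - by move=> n; apply: mono (abD _).1 (abD _).1 (leI2 (da n) (db n)).
  - by move=> n; apply: mono (abD _).2 (abD _).2 (leU2 (da n) (db n)).
  have -> : (fun n => fn s (a n `&` b n) + fn s (a n `|` b n))%R =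
            (fun n => fn s (a n) + fn s (b n))%R by apply/funext => n; exact: modular.
  by exists (X + Y)%R; apply: is_infimum_add => // n; apply: mono.
split; [exists (fun n => a n `&` b n) | exists (fun n => a n `|` b n)].
  split; last exact: is_infimum_meet.
  split; first by move=> n; exact: (abD n).1.
  split; first by move=> n; exact: leI2 (da n) (db n).
by split; first by exists (x `&` y); exact: is_infimum_meet.
split; last exact: is_infimum_join.
split; first by move=> n; exact: (abD n).2.
split; first by move=> n; exact: leU2 (da n) (db n).
by split; first by exists (x `|` y); exact: is_infimum_join.
Qed.

Lemma Sigma_dom_sublattice s : valuation s -> sublattice (Sigma_dom s).
Proof.
move=> [sl [mono modular]] x y.
move=> [a [[aD [ia [_ [X aX]]]] ax]] [b [[bD [ib [_ [Y bY]]]] by_]].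
have abD n : dom s (a n `&` b n) /\ dom s (a n `|` b n) := sl _ _ (aD n) (bD n).
have [meet_sup join_sup] :
    has_sup (fun n => fn s (a n `&` b n)) /\ has_sup (fun n => fn s (a n `|` b n)).
  apply: RcE.2.
  - by move=> n; apply: mono (abD _).1 (abD _).1 (leI2 (ia n) (ib n)).
  - by move=> n; apply: mono (abD _).2 (abD _).2 (leU2 (ia n) (ib n)).
  have -> : (fun n => fn s (a n `&` b n) + fn s (a n `|` b n))%R =
            (fun n => fn s (a n) + fn s (b n))%R by apply/funext => n; exact: modular.
  by exists (X + Y)%R; apply: is_supremum_add => // n; apply: mono.
split; [exists (fun n => a n `&` b n) | exists (fun n => a n `|` b n)].
  split; last exact: is_supremum_meet.
  split; first by move=> n; exact: (abD n).1.
  split; first by move=> n; exact: leI2 (ia n) (ib n).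
by split; first by exists (x `&` y); exact: is_supremum_meet.
split; last exact: is_supremum_join.
split; first by move=> n; exact: (abD n).2.
split; first by move=> n; exact: leU2 (ia n) (ib n).
by split; first by exists (x `|` y); exact: is_supremum_join.
Qed.

Lemma Pi_ext_complete s t (D : V -> Prop) :
  valuation s -> valuation t -> Pi_complete t -> extends s t ->
  (forall x, D x <-> Pi_dom s x) -> Pi_ext s (PMap D (fn t)).
Proof.
move=> vs vt tc st Ds; split=> //; split.
  apply: valuation_restrict => // [x y /Ds xs /Ds ys|x /Ds]; last first.
    exact: Pi_dom_complete.
  by have [] := Pi_dom_sublattice vs xs ys; split; apply/Ds.
move=> a sa x ax /=; rewrite -(extends_fn_seq st sa.1).
exact: (tc a (conv_dec_extends st sa) x ax).2.
Qed.

Lemma Sigma_ext_complete s t (D : V -> Prop) :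
  valuation s -> valuation t -> Sigma_complete t -> extends s t ->
  (forall x, D x <-> Sigma_dom s x) -> Sigma_ext s (PMap D (fn t)).
Proof.
move=> vs vt tc st Ds; split=> //; split.
  apply: valuation_restrict => // [x y /Ds xs /Ds ys|x /Ds]; last first.
    exact: Sigma_dom_complete.
  by have [] := Sigma_dom_sublattice vs xs ys; split; apply/Ds.
move=> a sa x ax /=; rewrite -(extends_fn_seq st sa.1).
exact: (tc a (conv_inc_extends st sa) x ax).2.
Qed.

End Valuations.

Section Construction.
Context {d : Order.disp_t} {V : latticeType d} {E : porderZmodType}.
Variables (C L : V -> Prop) (psi phi : V -> E).
Hypotheses (distrV : sigma_distributive V) (poE : po_group E) (RcE : R_complete E).
Hypotheses (valC : valuation (PMap C psi)) (Ccomplete : complete (PMap C psi)).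
Hypotheses (valL : valuation (PMap L phi)) (LC : extends (PMap L phi) (PMap C psi)).

Local Notation PiD D := (Pi_dom (PMap D psi)).
Local Notation SigmaD D := (Sigma_dom (PMap D psi)).

Definition sublattice_in_C (D : V -> Prop) : Prop :=
  sublattice D /\ (forall x, D x -> C x).

Lemma valuation_psi D : sublattice_in_C D -> valuation (PMap D psi).
Proof. by case=> sD DC; exact: valuation_restrict valC sD DC. Qed.

Lemma sublattice_in_C_extends D :
  sublattice_in_C D -> extends (PMap D psi) (PMap C psi).
Proof. by case. Qed.

Lemma Pi_ext_psi D D' : sublattice_in_C D ->
  (forall x, D' x <-> PiD D x) -> Pi_ext (PMap D psi) (PMap D' psi).
Proof.
move=> Dok; apply: (Pi_ext_complete distrV poE RcE (valuation_psi Dok) valC).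
- exact: Ccomplete.1.
- exact: sublattice_in_C_extends.
Qed.

Lemma Sigma_ext_psi D D' : sublattice_in_C D ->
  (forall x, D' x <-> SigmaD D x) -> Sigma_ext (PMap D psi) (PMap D' psi).
Proof.
move=> Dok; apply: (Sigma_ext_complete distrV poE RcE (valuation_psi Dok) valC).
- exact: Ccomplete.2.
- exact: sublattice_in_C_extends.
Qed.

Lemma sublattice_in_C_Pi D : sublattice_in_C D -> sublattice_in_C (PiD D).
Proof.
move=> Dok; split; first exact: Pi_dom_sublattice distrV poE RcE _ (valuation_psi Dok).
by move=> x; apply: Pi_dom_complete Ccomplete.1 (sublattice_in_C_extends Dok).
Qed.

Lemma sublattice_in_C_Sigma D : sublattice_in_C D -> sublattice_in_C (SigmaD D).
Proof.
move=> Dok; split; first exact: Sigma_dom_sublattice distrV poE RcE _ (valuation_psi Dok).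
by move=> x; apply: Sigma_dom_complete Ccomplete.2 (sublattice_in_C_extends Dok).
Qed.

Definition PiSigma (XY : (V -> Prop) * (V -> Prop)) := (PiD XY.2, SigmaD XY.1).

Definition inflating (XY : (V -> Prop) * (V -> Prop)) : Prop :=
  (forall x, XY.1 x -> (PiSigma XY).1 x) /\ (forall x, XY.2 x -> (PiSigma XY).2 x).

Lemma PiSigma_inflating XY : inflating XY -> inflating (PiSigma XY).
Proof.
by case: XY => X Y [XY YX]; split; [apply: Pi_dom_mono | apply: Sigma_dom_mono].
Qed.

Lemma PiSigma_grows XY x :
  inflating XY -> XY.1 x \/ XY.2 x -> (PiSigma XY).1 x /\ (PiSigma XY).2 x.
Proof.
case: XY => X Y [XY YX] /= [Xx|Yx]; split.
- exact: XY.
- exact: sub_Sigma_dom.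
- exact: sub_Pi_dom.
- exact: YX.
Qed.

Definition index_order : rel (V -> Prop) :=
  sval (well_ordering_principle (V -> Prop)).

Definition index_lt (S S' : V -> Prop) : Prop := ~~ index_order S' S.

Lemma index_lt_well_order : Defs.well_order index_lt.
Proof. exact: wochoice_well_order (svalP (well_ordering_principle _)). Qed.

(* The index (S, k) stands for the ordinal lambda_S + k, where lambda_S is the
   position of S in a well-order of the subsets of V; [base S] is the stage at
   lambda_S: L together with everything built at smaller indices. *)
Local Notation W := ((V -> Prop) * nat)%type.
Local Notation ltW := (lexn index_lt).

Definition base_step (S : V -> Prop) (rec : forall S', index_lt S' S -> V -> Prop) :
    V -> Prop :=
  fun x => L x \/ exists S' (lt_S : index_lt S' S) k,
    (iter k PiSigma (rec S' lt_S, rec S' lt_S)).1 x.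

Definition base : (V -> Prop) -> V -> Prop :=
  Fix index_lt_well_order.1 (fun=> V -> Prop) base_step.

Definition stage (b : W) := iter b.2 PiSigma (base b.1, base b.1).

Lemma base_iff S x : base S x <-> L x \/ exists g, index_lt g.1 S /\ (stage g).1 x.
Proof.
rewrite /base Fix_eq -/base => [|S' f f' ff']; last first.
  congr base_step; apply: functional_extensionality_dep => S''.
  by apply/funext; exact: ff'.
split=> [[Lx|[S' [lt_S [k xk]]]]|[Lx|[[S' k] [lt_S xk]]]].
- by left.
- by right; exists (S', k).
- by left.
- by right; exists S', lt_S, k.
Qed.

Lemma stage_inflating b : inflating (stage b).
Proof.
case: b => S n; elim: n => [|n IH]; last exact: PiSigma_inflating.
by split=> x Bx; [exact: sub_Pi_dom | exact: sub_Sigma_dom].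
Qed.

Lemma stage_grows b x : (stage b).1 x \/ (stage b).2 x ->
  (stage (b.1, b.2.+1)).1 x /\ (stage (b.1, b.2.+1)).2 x.
Proof. exact: PiSigma_grows (stage_inflating b). Qed.

Lemma base_sub_stage S n x : base S x -> (stage (S, n)).1 x /\ (stage (S, n)).2 x.
Proof.
move=> Sx; elim: n => [|n [xn _]]; first by split.
exact: (stage_grows (b := (S, n))) (or_introl xn).
Qed.

Lemma L_sub_stage b x : L x -> (stage b).1 x /\ (stage b).2 x.
Proof. by case: b => S n Lx; apply: base_sub_stage; apply/base_iff; left. Qed.

Lemma stage_mono g b x :
  ltW g b -> (stage g).1 x \/ (stage g).2 x -> (stage b).1 x /\ (stage b).2 x.
Proof.
case: g b => [S' k] [S n] [/= lt_S|[/= -> kn]] xg.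
  apply: base_sub_stage; apply/base_iff; right; exists (S', k.+1); split=> //.
  exact: (stage_grows (b := (S', k)) xg).1.
elim: n kn => // n IH; rewrite ltnS leq_eqVlt => /orP[/eqP <-|/IH xn].
  exact: (stage_grows (b := (S, k))).
exact: (stage_grows (b := (S, n))) (or_introl xn.1).
Qed.

Lemma stage_sublattice_in_C b :
  sublattice_in_C (stage b).1 /\ sublattice_in_C (stage b).2.
Proof.
case: b => S n; elim/(well_founded_ind index_lt_well_order.1): S n => S IH n.
suff Sok : sublattice_in_C (base S).
  elim: n => [|n [Xok Yok]]; first by split.
  by split; [exact: sublattice_in_C_Pi | exact: sublattice_in_C_Sigma].
have common x y : base S x -> base S y -> (L x /\ L y) \/
    exists g, index_lt g.1 S /\ (stage g).1 x /\ (stage g).1 y.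
  move=> /base_iff[Lx|[g [gS xg]]] /base_iff[Ly|[h [hS yh]]].
  - by left.
  - by right; exists h; split; [|split] => //; exact: (L_sub_stage h Lx).1.
  - by right; exists g; split; [|split] => //; exact: (L_sub_stage g Ly).1.
  - right; have [gh|[gh|hg]] := (well_order_lexn index_lt_well_order).2.2 g h.
    + by exists h; split; [|split] => //; exact: (stage_mono gh (or_introl xg)).1.
    + by subst h; exists g.
    + by exists g; split; [|split] => //; exact: (stage_mono hg (or_introl yh)).1.
split.
  move=> x y Sx Sy; case: (common x y Sx Sy) => [[Lx Ly]|[g [gS [xg yg]]]].
    by have [] := valL.1 x y Lx Ly; split; apply/base_iff; left.
  have [xyg xyg'] := (IH g.1 gS g.2).1.1 x y xg yg.
  by split; apply/base_iff; right; exists g.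
by move=> x /base_iff[Lx|[g [gS xg]]]; [exact: LC.1 | exact: (IH g.1 gS g.2).1.2].
Qed.

Definition Pstage b := PMap (stage b).1 psi.
Definition Sstage b := PMap (stage b).2 psi.

Lemma stage_hierarchy : hierarchy (PMap L phi) ltW Pstage Sstage.
Proof.
case=> S n; split; [|split].
- move=> nolt; have n0 : n = 0%N by case: n nolt => // n /(_ (S, n)) []; right.
  subst n; have baseL x : base S x <-> L x.
    split=> [/base_iff[//|[g [gS _]]]|Lx]; last by apply/base_iff; left.
    by case: (nolt g); apply/lexn0.
  by split; split=> x /=; [exact: baseL | move/baseL; exact: LC.2
                          | exact: baseL | move/baseL; exact: LC.2].
- move=> g /(is_pred_lexnP index_lt_well_order) [-> ->].
  have [Xok Yok] := stage_sublattice_in_C g.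
  split; first exact: Pi_ext_psi Yok (fun=> iff_refl _).
  exact: Sigma_ext_psi Xok (fun=> iff_refl _).
- move=> [g0 g0b] nopred.
  have n0 : n = 0%N by case: n g0b nopred => // n _ /(_ (S, n)) []; exact: is_pred_lexnS.
  subst n; split; [|split; [|split]].
  + move=> x /=; split=> [/base_iff[Lx|[g [gS xg]]]|[g [gb xg]]].
    * by exists g0; split=> //; exact: (L_sub_stage g0 Lx).1.
    * by exists g; split=> //; apply/lexn0.
    * exact: (stage_mono gb (or_introl xg)).1.
  + by move=> g gb; split=> // x xg; exact: (stage_mono gb (or_introl xg)).1.
  + move=> x /=; split=> [/base_iff[Lx|[g [gS xg]]]|[g [gb xg]]].
    * by exists g0; split=> //; exact: (L_sub_stage g0 Lx).2.
    * exists (g.1, g.2.+1); split; first exact/lexn0.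
      exact: (stage_grows (or_introl xg)).2.
    * exact: (stage_mono gb (or_intror xg)).2.
  + by move=> g gb; split=> // x xg; exact: (stage_mono gb (or_intror xg)).2.
Qed.

Lemma stage_collapsed S :
  (forall x, PiD (base S) x -> base S x) -> (forall x, SigmaD (base S) x -> base S x) ->
  collapsed_at (PMap L phi) (Pstage (S, 0%N)).
Proof.
move=> PiB SigmaB; have [Bok _] := stage_sublattice_in_C (S, 0%N).
exists W, ltW, Pstage, Sstage, (S, 0%N).
split; first exact: well_order_lexn index_lt_well_order.
split; first exact: stage_hierarchy.
split; first by exists (Pstage (S, 1%N)); exact: Pi_ext_psi Bok (fun=> iff_refl _).
split; first by exists (Sstage (S, 1%N)); exact: Sigma_ext_psi Bok (fun=> iff_refl _).
split; first by left.
split; [apply: Pi_ext_psi Bok _ | apply: Sigma_ext_psi Bok _] => x.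
  by split=> [Bx|/PiB]; first exact: sub_Pi_dom.
by split=> [Bx|/SigmaB]; first exact: sub_Sigma_dom.
Qed.

Lemma phi_extendible : extendible (PMap L phi).
Proof.
apply: contrapT => nonext.
have escape S : exists x,
    ((stage (S, 1%N)).1 x \/ (stage (S, 1%N)).2 x) /\ ~ base S x.
  apply: contrapT => none; apply: nonext; exists (Pstage (S, 0%N)).
  by apply: stage_collapsed => x Sx; apply: contrapT => nBx; apply: none;
    exists x; split=> //; first [by left | by right].
have [g gP] := choice escape.
apply: (@no_injection_from_predicates V g).
apply: (separating_injective (lt := index_lt) (B := base)) => [||S S' lt_S].
- exact: index_lt_well_order.2.2.
- by move=> S; case: (gP S).
- by case: (stage_mono (g := (S, 1%N)) (b := (S', 0%N)) (or_introl lt_S) (gP S).1).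
Qed.

End Construction.

Theorem proposition5p36 (d : Order.disp_t) (V : latticeType d)
    (E : porderZmodType) (L C : V -> Prop) (phi psi : V -> E) :
  valuation_system (PMap L phi) ->
  valuation_system (PMap C psi) ->
  extends (PMap L phi) (PMap C psi) ->
  complete (PMap C psi) ->
  extendible (PMap L phi) /\
  (forall Q, collapsed_at (PMap L phi) Q -> extends Q (PMap C psi)).
Proof.
move=> [distrV [poE [RcE valL]]] [_ [_ [_ valC]]] LC Ccomplete.
split; first exact: phi_extendible distrV poE RcE valC Ccomplete valL LC.
by move=> Q QL; exact: collapsed_at_extends QL LC Ccomplete.
Qed.
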